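(* Let $a,c,p\in\mathbb{C}$ with $-c\notin\mathbb{N}\cup\{0\}$ and $c\neq2$. Write $\sinh(pz)M(a,c;z)=\sum_{n=0}^\infty u_nz^n$, $z\in\mathbb{C}$. Then $u_0=0$, $u_1=p$, $u_2=\frac{ap}{c}$, $u_3=\frac{a(a+1)p}{2c(c+1)}+\frac{p^3}{6}$, $u_4=\frac{ap^3}{6c}+\frac{a(a+1)(a+2)p}{6c(c+1)(c+2)}$, $u_5=\frac{a(a+1)p^3}{12c(c+1)}+\frac{a(a+1)(a+2)(a+3)p}{24c(c+1)(c+2)(c+3)}+\frac{p^5}{120}$, and for all integers $n\ge5$, \[ u_{n+1}=\sum_{i=0}^5\beta_i(n)u_{n-i}, \] where, with $D(n)=(c-2)c\,n(n+1)(c+n-1)(c+n)$, \[ \beta_0(n)=\frac{2\left(a\left(c^2-2cn+c-2(n-2)^2\right)+c(n-1)(2c+n-5)\right)}{(c-2)c(n+1)(c+n)}, \] \[ \beta_1(n)=\frac{1}{D(n)}\Big[(n-4)(n-3)(n-2)(n-1)(4p^2-1)+2(n-3)(n-2)(n-1)\big(4a+c(4p^2-3)\big) +(n-2)(n-1)\big(8a^2+a(4c+6)+c(6(c-2)p^2-6c+1)\big) +2(n-1)\big(a^2(4c-2)-3a(c-1)c+(c-2)c(c+1)p^2\big) +(c-2)\big(-a^2(c+2)+ac+c^2(c+1)p^2\big)\Big], \] \[ \beta_2(n)=\frac{1}{D(n)}\Big[2p^2(c-3)\big(a(3c+8)-2c^2+c-32\big)+2p^2\big(n(10a+c(31-3c)-104)-6(c-6)n^2-4n^3\big)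 -2(a+n-3)\big(2a^2-a(c-2n+3)-(n-2)(2c+n-4)\big)\Big], \] \[ \beta_3(n)=-\frac{1}{D(n)}\Big[p^2\big(-12a^2+2a(6c+5)-6c^2+c\big)+2(n-3)\big(a+c(4p^2-3)p^2\big) +(a-1)a+5(c-2)cp^4+(n-4)(n-3)(8p^4-6p^2+1)\Big], \] \[ \beta_4(n)=\frac{2p^2\left(p^2(-6a+5c+4(n-4))+3a-2c-n+4\right)}{D(n)},\qquad \beta_5(n)=\frac{4p^6-5p^4+p^2}{D(n)}. \]
   Context: For $a\in\mathbb{C}$, $(a)_n=a(a+1)\cdots(a+n-1)$ denotes the Pochhammer symbol, with $(a)_0=1$. For $a,c\in\mathbb{C}$ with $-c\notin\mathbb{N}\cup\{0\}$, the confluent hypergeometric (Kummer) function is $M(a,c;z)=\sum_{n=0}^\infty \frac{(a)_n}{(c)_n\,n!}z^n$, $z\in\mathbb{C}$. *)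

From HB Require Import structures.
From mathcomp Require Import all_boot all_order all_algebra.
From mathcomp Require Import complex.
From mathcomp Require Import reals.
Set Implicit Arguments. Unset Strict Implicit. Unset Printing Implicit Defensive.
Import Order.TTheory GRing.Theory Num.Theory.
Local Open Scope ring_scope.

Section Defs.
Variable F : fieldType.

Definition poch (a : F) (n : nat) : F := \prod_(i < n) (a + i%:R).

Definition kummer_coef (a c : F) (n : nat) : F :=
  poch a n / (poch c n * (n`!)%:R).

(* n-th Taylor coefficient of sinh(p z) = (e^{pz} - e^{-pz})/2 *)
Definition sinh_coef (p : F) (n : nat) : F :=
  (p ^+ n - (- p) ^+ n) / (2 * (n`!)%:R).

(* u_n : n-th Taylor coefficient of sinh(pz) M(a,c;z) (Cauchy product) *)
Definition u_coef (a c p : F) (n : nat) : F :=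
  \sum_(k < n.+1) sinh_coef p k * kummer_coef a c (n - k).

Definition Dn (c : F) (n : nat) : F :=
  let N := n%:R in (c - 2) * c * N * (N + 1) * (c + N - 1) * (c + N).

Definition beta0 (a c : F) (n : nat) : F :=
  let N := n%:R in
  2 * (a * (c ^+ 2 - 2 * c * N + c - 2 * (N - 2) ^+ 2)
       + c * (N - 1) * (2 * c + N - 5))
  / ((c - 2) * c * (N + 1) * (c + N)).

Definition beta1 (a c p : F) (n : nat) : F :=
  let N := n%:R in
  ((N - 4) * (N - 3) * (N - 2) * (N - 1) * (4 * p ^+ 2 - 1)
   + 2 * (N - 3) * (N - 2) * (N - 1) * (4 * a + c * (4 * p ^+ 2 - 3))
   + (N - 2) * (N - 1) * (8 * a ^+ 2 + a * (4 * c + 6)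
                          + c * (6 * (c - 2) * p ^+ 2 - 6 * c + 1))
   + 2 * (N - 1) * (a ^+ 2 * (4 * c - 2) - 3 * a * (c - 1) * c
                    + (c - 2) * c * (c + 1) * p ^+ 2)
   + (c - 2) * (- a ^+ 2 * (c + 2) + a * c + c ^+ 2 * (c + 1) * p ^+ 2))
  / Dn c n.

Definition beta2 (a c p : F) (n : nat) : F :=
  let N := n%:R in
  (2 * p ^+ 2 * (c - 3) * (a * (3 * c + 8) - 2 * c ^+ 2 + c - 32)
   + 2 * p ^+ 2 * (N * (10 * a + c * (31 - 3 * c) - 104)
                   - 6 * (c - 6) * N ^+ 2 - 4 * N ^+ 3)
   - 2 * (a + N - 3) * (2 * a ^+ 2 - a * (c - 2 * N + 3)
                        - (N - 2) * (2 * c + N - 4)))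
  / Dn c n.

Definition beta3 (a c p : F) (n : nat) : F :=
  let N := n%:R in
  - ((p ^+ 2 * (- 12 * a ^+ 2 + 2 * a * (6 * c + 5) - 6 * c ^+ 2 + c)
      + 2 * (N - 3) * (a + c * (4 * p ^+ 2 - 3) * p ^+ 2)
      + (a - 1) * a + 5 * (c - 2) * c * p ^+ 4
      + (N - 4) * (N - 3) * (8 * p ^+ 4 - 6 * p ^+ 2 + 1))
     / Dn c n).

Definition beta4 (a c p : F) (n : nat) : F :=
  let N := n%:R in
  2 * p ^+ 2 * (p ^+ 2 * (- 6 * a + 5 * c + 4 * (N - 4)) + 3 * a - 2 * c - N + 4)
  / Dn c n.

Definition beta5 (c p : F) (n : nat) : F :=
  (4 * p ^+ 6 - 5 * p ^+ 4 + p ^+ 2) / Dn c n.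

End Defs.

From HB Require Import structures.
From mathcomp Require Import all_boot all_order all_algebra.
From mathcomp Require Import complex.
From mathcomp Require Import reals.
From mathcomp Require Import ring.
Set Implicit Arguments.
Unset Strict Implicit.
Unset Printing Implicit Defensive.
Import Order.TTheory GRing.Theory Num.Theory.
Local Open Scope ring_scope.

(* sinh(pz) M(a,c;z) = (e^{pz} M - e^{-pz} M) / 2.  For any q the product
   w = e^{qz} M satisfies z w'' + (c - (1 + 2q) z) w' + (q (1 + q) z - c q - a) w = 0,
   so its Taylor coefficients obey a three-term recurrence.  Five consecutive
   instances of it imply a six-term recurrence whose coefficients depend on q only
   through q^2; it therefore holds for q = p and q = -p alike, hence for u. *)

Section ExpProduct.
Variable F : fieldType.
Hypothesis F0 : [pchar F] =i pred0.
Implicit Types (q al : F) (f g : nat -> F).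

Definition exp_coef q k := q ^+ k / k`!%:R.

Definition exp_mul_coef q f n := \sum_(k < n.+1) exp_coef q k * f (n - k)%N.

Definition deriv_coef f j := j.+1%:R * f j.+1.

Definition euler_coef f j := j%:R * f j.

Lemma natf_eq0 n : (n%:R == 0 :> F) = (n == 0)%N.
Proof. exact: (pcharf0P _).1 F0 n. Qed.

Lemma exp_coefS q k : k.+1%:R * exp_coef q k.+1 = q * exp_coef q k.
Proof.
rewrite /exp_coef factS natrM exprS; field.
by rewrite nat1r !natf_eq0 -lt0n fact_gt0.
Qed.

Lemma eq_exp_mul_coef q f g n : f =1 g -> exp_mul_coef q f n = exp_mul_coef q g n.
Proof. by move=> fg; apply: eq_bigr => k _; rewrite fg. Qed.

Lemma exp_mul_coefD q f g n :
  exp_mul_coef q (fun j => f j + g j) n = exp_mul_coef q f n + exp_mul_coef q g n.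
Proof. by rewrite -big_split; apply: eq_bigr => k _; rewrite mulrDr. Qed.

Lemma exp_mul_coefZ q al f n :
  exp_mul_coef q (fun j => al * f j) n = al * exp_mul_coef q f n.
Proof. by rewrite mulr_sumr; apply: eq_bigr => k _; rewrite mulrCA. Qed.

Lemma exp_mul_coef_deriv q f n :
  exp_mul_coef q (deriv_coef f) n = exp_mul_coef q (euler_coef f) n.+1.
Proof.
rewrite /exp_mul_coef [in RHS]big_ord_recr /= subnn /euler_coef mul0r mulr0 addr0.
by apply: eq_bigr => k _; rewrite subSn // -ltnS.
Qed.

Lemma exp_mul_coef_euler q f n :
  exp_mul_coef q (euler_coef f) n.+1
  = n.+1%:R * exp_mul_coef q f n.+1 - q * exp_mul_coef q f n.
Proof.
have split_weight k : (k <= n.+1)%N ->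
    exp_coef q k * euler_coef f (n.+1 - k)
    = n.+1%:R * (exp_coef q k * f (n.+1 - k)%N) - k%:R * exp_coef q k * f (n.+1 - k)%N.
  by move=> le_kn; rewrite /euler_coef natrB //; ring.
rewrite /exp_mul_coef (eq_bigr _ (fun (k : 'I_n.+2) _ => split_weight k (ltn_ord k))) sumrB.
rewrite -mulr_sumr; congr (_ - _).
rewrite big_ord_recl !mul0r add0r mulr_sumr; apply: eq_bigr => k _.
by rewrite lift0 mulrA exp_coefS subSS.
Qed.

End ExpProduct.

Section KummerTimesExp.
Variable F : fieldType.
Hypothesis F0 : [pchar F] =i pred0.
Variables (a c : F).
Hypothesis c_not_npos : forall m : nat, c != - m%:R.

Lemma natr_addc_neq0 j : j%:R + c != 0.
Proof. by rewrite addrC addr_eq0 c_not_npos. Qed.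

Lemma c_neq0 : c != 0.
Proof. by have := natr_addc_neq0 0; rewrite add0r. Qed.

Lemma poch_neq0 n : poch c n != 0.
Proof. by apply/prodf_neq0 => i _; rewrite addrC natr_addc_neq0. Qed.

Lemma kummer_coefS j :
  j.+1%:R * (j%:R + c) * kummer_coef a c j.+1 = (j%:R + a) * kummer_coef a c j.
Proof.
rewrite /kummer_coef /poch !big_ord_recr /= -/(poch a j) -/(poch c j) factS natrM.
field; rewrite nat1r (natf_eq0 F0) -lt0n fact_gt0 poch_neq0 /=.
by rewrite addrC natr_addc_neq0 (natf_eq0 F0).
Qed.

Definition exp_kummer_rec (q : F) (X : nat -> F) : Prop :=
  forall j, X j.+2 = (((1 + 2 * q) * j.+1%:R + c * q + a) * X j.+1 - q * (1 + q) * X j)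
                     / (j.+2%:R * (j.+1%:R + c)).

Lemma exp_mul_kummer_coef_rec q : exp_kummer_rec q (exp_mul_coef q (kummer_coef a c)).
Proof.
move=> n; set m := kummer_coef a c.
(* Kummer's equation z M'' + (c - z) M' = a M, as (z M' + (c - 1) M)' = z M' + a M. *)
have kummer_ode j : deriv_coef (fun i => euler_coef m i + (c - 1) * m i) j
                    = euler_coef m j + a * m j.
  by rewrite /deriv_coef /euler_coef -[RHS]mulrDl /m -kummer_coefS; ring.
have := eq_exp_mul_coef q n.+1 kummer_ode.
rewrite exp_mul_coef_deriv (exp_mul_coef_euler F0) !exp_mul_coefD !exp_mul_coefZ.
rewrite !(exp_mul_coef_euler F0).
move=> /eqP; rewrite -subr_eq0 => /eqP ode_coef.
have d_neq0 : n.+2%:R * (n.+1%:R + c) != 0.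
  by rewrite mulf_neq0 ?natr_addc_neq0 ?(natf_eq0 F0).
apply: (canRL (mulfK d_neq0)); apply/eqP; rewrite -subr_eq0 -ode_coef; apply/eqP.
ring.
Qed.

Hypothesis c_neq2 : c != 2.

Lemma exp_kummer_rec_six_term p q (X : nat -> F) :
  q ^+ 2 = p ^+ 2 -> exp_kummer_rec q X ->
  forall n, (5 <= n)%N ->
    X n.+1 = beta0 a c n * X n + beta1 a c p n * X (n - 1)%N
             + beta2 a c p n * X (n - 2)%N + beta3 a c p n * X (n - 3)%N
             + beta4 a c p n * X (n - 4)%N + beta5 c p n * X (n - 5)%N.
Proof.
move=> qp rec [|[|[|[|[|k]]]]] // _; rewrite !subSS !subn0.
have qp4 : p ^+ 4 = q ^+ 4 by rewrite -[4%N]/(2 * 2)%N !exprM qp.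
have qp6 : p ^+ 6 = q ^+ 6 by rewrite -[6%N]/(2 * 3)%N !exprM qp.
(* Unfolding [rec] leaves only X k and X k.+1: a rational identity in k, a, c, q. *)
rewrite /beta0 /beta1 /beta2 /beta3 /beta4 /beta5 /Dn /= qp4 qp6 -qp !rec.
field.
have -> : c + (5 + k%:R) - 1 = k.+4%:R + c by ring.
rewrite -!natrD nat1r natr1 !(natf_eq0 F0) subr_eq0 c_neq2 c_neq0.
by rewrite !(addrC c) !natr_addc_neq0 !addSn /=.
Qed.

End KummerTimesExp.

Lemma sinh_coefE (F : fieldType) (p : F) k :
  sinh_coef p k = (exp_coef p k - exp_coef (- p) k) / 2.
Proof. by rewrite /sinh_coef /exp_coef -mulrBl -mulrA -invfM [_ * 2]mulrC. Qed.

Lemma u_coef_exp_mul (F : fieldType) (a c p : F) n :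
  u_coef a c p n
  = (exp_mul_coef p (kummer_coef a c) n - exp_mul_coef (- p) (kummer_coef a c) n) / 2.
Proof.
rewrite /u_coef /exp_mul_coef -sumrB mulr_suml; apply: eq_bigr => k _.
by rewrite sinh_coefE mulrAC mulrBl.
Qed.

Theorem theorem2p9 (R : realType) (a c p : R[i])
  (hc : forall m : nat, c != - (m%:R))
  (hc2 : c != 2) :
  let u := u_coef a c p in
  [/\ u 0%N = 0, u 1%N = p, u 2%N = a * p / c,
      u 3%N = a * (a + 1) * p / (2 * c * (c + 1)) + p ^+ 3 / 6
    & u 4%N = a * p ^+ 3 / (6 * c)
              + a * (a + 1) * (a + 2) * p / (6 * c * (c + 1) * (c + 2))] /\
  (u 5%N = a * (a + 1) * p ^+ 3 / (12 * c * (c + 1))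
              + a * (a + 1) * (a + 2) * (a + 3) * p
                / (24 * c * (c + 1) * (c + 2) * (c + 3))
              + p ^+ 5 / 120) /\
  (forall n : nat, (5 <= n)%N ->
      u n.+1 = beta0 a c n * u n + beta1 a c p n * u (n - 1)%N
               + beta2 a c p n * u (n - 2)%N + beta3 a c p n * u (n - 3)%N
               + beta4 a c p n * u (n - 4)%N + beta5 c p n * u (n - 5)%N).
Proof.
move=> u; have F0 : [pchar R[i]] =i pred0 := pchar_num _.
have cn j : c + j%:R != 0 by rewrite addrC natr_addc_neq0.
have c0 := c_neq0 hc.
split; [split | split]; last first.
  move=> n n_ge5; rewrite /u !u_coef_exp_mul.
  have rec q := exp_mul_kummer_coef_rec F0 a hc q.
  rewrite (exp_kummer_rec_six_term F0 hc hc2 (erefl (p ^+ 2)) (rec p) n_ge5).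
  rewrite (exp_kummer_rec_six_term F0 hc hc2 (sqrrN p) (rec (- p)) n_ge5).
  by ring.
all: rewrite /u /u_coef /sinh_coef /kummer_coef /poch !big_ord_recr !big_ord0.
all: rewrite /subn /factorial /=.
all: by field; rewrite ?c0 ?(cn 1%N) ?cn.
Qed.
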